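(* Let $\mathbb{A}$ be a medial generic isospectral algebra of dimension $n$ over an algebraically closed subfield $\mathbb{K}$ of $\mathbb{C}$, let $\epsilon_n=e^{2\pi\sqrt{-1}/n}$, let $c$ be a nonzero idempotent and let $w_1\neq0$ satisfy $cw_1=\epsilon_nw_1$. Then every nonassociative monomial $w_1^{\alpha}$ in $w_1$ satisfies $w_1^{\alpha}=\epsilon_n^s\,w_1^{\deg w_1^\alpha}$ for some integer $0\le s\le n-1$ (the right side being a principal power), and for all $k,m\ge1$, $$w_1^kw_1^m=\epsilon_n^{-(k-1)(m-1)}\,w_1^{k+m}.$$
   Context: All algebras commutative, possibly nonassociative, finite-dimensional. Medial: $(xy)(zw)=(xz)(yw)$ identically. Isospectral: all nonzero idempotents $c$ have the same spectrum (multiset of eigenvalues of $L_c:x\mapsto cx$). Generic: the complexification has exactly $2^n$ idempotents (including $0$). Principal powers: $z^1=z$, $z^{k+1}=z\,z^k$. A nonassociative monomial in $z$ is an element of the commutative multiplicative groupoid generated by $z$; its degree is the number of occurrences of $z$ (e.g. $\deg z^2z^2=4$). *)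

From HB Require Import structures.
From mathcomp Require Import all_boot all_order all_algebra.
Set Implicit Arguments. Unset Strict Implicit. Unset Printing Implicit Defensive.
Import Order.TTheory GRing.Theory Num.Theory.
Local Open Scope ring_scope.

Section Alg.
Variables (K : numClosedFieldType) (n : nat).
Variable mul : 'rV[K]_n -> 'rV[K]_n -> 'rV[K]_n.

Definition bilinear_comm_product : Prop :=
  (forall x y, mul x y = mul y x) /\
  (forall (a : K) x y z, mul (a *: x + y) z = a *: mul x z + mul y z).

Definition medial : Prop :=
  forall x y z w, mul (mul x y) (mul z w) = mul (mul x z) (mul y w).

Definition is_idempotent (c : 'rV[K]_n) : Prop := mul c c = c.

(* spectrum of L_c : x |-> c x, as a multiset of eigenvalues = its
   characteristic polynomial (K algebraically closed) *)
Definition spectrum (c : 'rV[K]_n) : {poly K} :=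
  char_poly (lin1_mx (fun x => mul c x)).

Definition isospectral : Prop :=
  forall c d, c != 0 -> d != 0 -> is_idempotent c -> is_idempotent d ->
    spectrum c = spectrum d.

Definition generic : Prop :=
  exists s : seq 'rV[K]_n, [/\ uniq s, size s = (2 ^ n)%N &
    forall x, is_idempotent x <-> x \in s].

(* principal powers: ppow z 1 = z, ppow z k.+1 = z * ppow z k
   (ppow z 0 := 0 is a dummy value, never used) *)
Fixpoint ppow (z : 'rV[K]_n) (k : nat) : 'rV[K]_n :=
  match k with
  | 0 => 0
  | 1 => z
  | k'.+1 => mul z (ppow z k')
  end.

End Alg.

Inductive monomial : Type :=
| mX : monomial
| mM : monomial -> monomial -> monomial.

Fixpoint mdeg (a : monomial) : nat :=
  match a with mX => 1%N | mM a b => (mdeg a + mdeg b)%N end.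

Fixpoint meval (K : numClosedFieldType) (n : nat)
  (mul : 'rV[K]_n -> 'rV[K]_n -> 'rV[K]_n) (z : 'rV[K]_n) (a : monomial)
  : 'rV[K]_n :=
  match a with mX => z | mM a b => mul (meval mul z a) (meval mul z b) end.

(* eps_n = exp(2 pi i / n) : square of the principal n-th root of -1 *)
Definition epsn (K : numClosedFieldType) (n : nat) : K := (n.-root (-1)) ^+ 2.

From HB Require Import structures.
From mathcomp Require Import all_boot all_order all_algebra.
From mathcomp Require Import zify.
Import Order.TTheory GRing.Theory Num.Theory.
Local Open Scope ring_scope.

(* Write w^k for principal powers.  Mediality gives
   c w^(k+1) = (c c)(w w^k) = (c w)(c w^k), so every principal power of an
   eigenvector w of L_c with eigenvalue e is again an eigenvector, with
   eigenvalue e^(k+1).  Mediality also gives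
   w^(k+2) w^(m+2) = (w w)(w^(k+1) w^(m+1)), and w^2 w^(i+1) is
   e^(-i) w^(i+3), as e w^(i+3) = (c w)(w w^(i+1)) = (c w^(i+1))(w w).
   Induction then yields w^(k+1) w^(m+1) = e^(-k m) w^(k+m+2), and every
   monomial is a power of e times the principal power of its degree. *)

Lemma mdeg_gt0 (a : monomial) : (0 < mdeg a)%N.
Proof. by elim: a => //= a IHa b _; rewrite addn_gt0 IHa. Qed.

Lemma epsn_expn (K : numClosedFieldType) {n : nat} :
  (0 < n)%N -> epsn K n ^+ n = 1.
Proof. by move=> n_gt0; rewrite /epsn exprAC rootCK // sqrrN expr1n. Qed.

Lemma epsn_neq0 (K : numClosedFieldType) {n : nat} : (0 < n)%N -> epsn K n != 0.
Proof.
move=> n_gt0; apply: contra_eq_neq (epsn_expn K n_gt0) => ->.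
by rewrite expr0n gtn_eqF // eq_sym oner_eq0.
Qed.

Lemma rowv_neq0_dim_gt0 {K : numClosedFieldType} {n : nat} {v : 'rV[K]_n} :
  v != 0 -> (0 < n)%N.
Proof. by case: n v => // v; rewrite thinmx0 eqxx. Qed.

Lemma root_of_unity_invE {R : comUnitRingType} {n : nat} {e : R} :
  (0 < n)%N -> e ^+ n = 1 -> e^-1 = e ^+ n.-1.
Proof.
move=> n_gt0 en1.
have e_unit : e \is a GRing.unit.
  by apply/unitrPr; exists (e ^+ n.-1); rewrite -exprS prednK.
by apply: (mulrI e_unit); rewrite mulrV // -exprS prednK.
Qed.

Section MedialAlgebra.

Set Implicit Arguments.

Variables (K : numClosedFieldType) (n : nat).
Variable mul : 'rV[K]_n -> 'rV[K]_n -> 'rV[K]_n.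

Lemma ppowSS z k : ppow mul z k.+2 = mul z (ppow mul z k.+1).
Proof. by []. Qed.

Hypothesis mulC : forall x y, mul x y = mul y x.
Hypothesis mul_linear : forall (a : K) x y z, mul (a *: x + y) z = a *: mul x z + mul y z.
Hypothesis mul_medial : medial mul.

Lemma mul0l z : mul 0 z = 0.
Proof.
have := mul_linear 1 0 0 z; rewrite !scale1r addr0 => /esym/eqP.
by rewrite -subr_eq0 addrK => /eqP.
Qed.

Lemma mulZl a x y : mul (a *: x) y = a *: mul x y.
Proof. by rewrite -[a *: x]addr0 mul_linear mul0l addr0. Qed.

Lemma mulZr a x y : mul x (a *: y) = a *: mul x y.
Proof. by rewrite mulC mulZl mulC. Qed.

Lemma mul_medial_swap x y z u : mul (mul x y) (mul z u) = mul (mul x u) (mul z y).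
Proof. by rewrite [mul z u]mulC mul_medial [mul y z]mulC. Qed.

Variables (c w : 'rV[K]_n) (e : K).
Hypothesis c_idem : is_idempotent mul c.
Hypothesis c_mul_w : mul c w = e *: w.

Local Notation pw := (ppow mul w).

Lemma idem_mul_ppow k : mul c (pw k.+1) = e ^+ k.+1 *: pw k.+1.
Proof.
elim: k => [|k IHk]; first by rewrite expr1.
by rewrite ppowSS -{1}c_idem mul_medial c_mul_w IHk mulZl mulZr scalerA -exprS.
Qed.

Hypothesis e_neq0 : e != 0.

Lemma ppow2_mul k : e ^+ k *: mul (pw 2) (pw k.+1) = pw k.+3.
Proof.
apply: (scalerI e_neq0); rewrite scalerA -exprS.
rewrite [pw k.+3]ppowSS -[in RHS]mulZl -c_mul_w ppowSS mul_medial_swap.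
by rewrite idem_mul_ppow mulZl mulC.
Qed.

Lemma ppow_mul_scaled k m : e ^+ (k * m) *: mul (pw k.+1) (pw m.+1) = pw (k + m).+2.
Proof.
elim: k m => [|k IHk] [|m]; rewrite ?mul0n ?muln0 ?scale1r ?addn0 ?(mulC (pw 1)) //.
rewrite [pw k.+2]ppowSS [pw m.+2]ppowSS mul_medial.
have -> : (k.+1 * m.+1 = (k + m).+1 + k * m)%N by rewrite mulSn mulnS; lia.
by rewrite exprD -scalerA -mulZr IHk ppow2_mul addSn addnS.
Qed.

Lemma ppow_mul k m : mul (pw k.+1) (pw m.+1) = e ^- (k * m) *: pw (k + m).+2.
Proof. by rewrite -ppow_mul_scaled scalerA mulVf ?scale1r ?expf_neq0. Qed.

Hypotheses (n_gt0 : (0 < n)%N) (e_expn : e ^+ n = 1).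

Lemma meval_ppow a : exists s, meval mul w a = e ^+ s *: pw (mdeg a).
Proof.
elim: a => [|a [s1 IHa] b [s2 IHb]]; first by exists 0%N; rewrite scale1r.
rewrite /= IHa IHb mulZl mulZr scalerA -exprD.
case: (mdeg a) (mdeg_gt0 a) => // k _; case: (mdeg b) (mdeg_gt0 b) => // m _.
rewrite ppow_mul -exprVn (root_of_unity_invE n_gt0 e_expn) -exprM scalerA -exprD.
by eexists; rewrite addSn addnS.
Qed.

Lemma meval_ppow_mod a :
  exists2 s, (s <= n - 1)%N & meval mul w a = e ^+ s *: pw (mdeg a).
Proof.
have [s ->] := meval_ppow a; exists (s %% n)%N; last by rewrite expr_mod.
by have := ltn_pmod s n_gt0; lia.
Qed.

End MedialAlgebra.

Theorem proposition6p4 (K : numClosedFieldType) (n : nat)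
  (mul : 'rV[K]_n -> 'rV[K]_n -> 'rV[K]_n) :
  bilinear_comm_product mul -> medial mul -> generic mul -> isospectral mul ->
  forall (c w1 : 'rV[K]_n),
    c != 0 -> is_idempotent mul c ->
    w1 != 0 -> mul c w1 = epsn K n *: w1 ->
    (forall a : monomial, exists2 s : nat, (s <= n - 1)%N &
        meval mul w1 a = (epsn K n ^+ s) *: ppow mul w1 (mdeg a)) /\
    (forall k m : nat, (1 <= k)%N -> (1 <= m)%N ->
        mul (ppow mul w1 k) (ppow mul w1 m)
        = (epsn K n ^- ((k - 1) * (m - 1))) *: ppow mul w1 (k + m)).
Proof.
move=> [mulC mul_linear] mul_medial _ _ c w c_neq0 c_idem _ c_mul_w.
have n_gt0 := rowv_neq0_dim_gt0 c_neq0.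
have e_expn := epsn_expn K n_gt0.
have e_neq0 := epsn_neq0 K n_gt0.
split=> [a|[|k] [|m] // _ _].
  exact: (meval_ppow_mod mulC mul_linear mul_medial c_idem c_mul_w e_neq0 n_gt0 e_expn a).
rewrite !subn1 !succnK addSn addnS.
exact: (ppow_mul mulC mul_linear mul_medial c_idem c_mul_w e_neq0 k m).
Qed.
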